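(* Let $q>0$, and let $\mathbf m$, $\mathbf n$ be proper paths for $q$ with $c(q,\mathbf m)=c(q,\mathbf n)$. Then there is a proper loop $\mathbf u$ for $q$ such that $\mathbf m=(\mathbf u\mathbf n)^*$. Moreover, $\mathbf u$ is different from the trivial loop $(0)$ if and only if $\mathbf m\ne\mathbf n$.
   Context: Let $q>0$. For $k\ge0$ and $\mathbf m=(m_0,\dots,m_k)\in\mathbb Z^{k+1}$ put $\mathbf m_j=(m_0,\dots,m_j)$; define $c(q,\mathbf m_0)=m_0$ and $c(q,\mathbf m_j)=m_j+\frac{1}{q\,c(q,\mathbf m_{j-1})}$ for $1\le j\le k$. $\mathbf m$ is a path for $q$ of length $k$ if $c(q,\mathbf m_j)\ne0$ for $0\le j\le k-1$; it is proper if $m_j\ne0$ for $0\le j\le k-1$. A loop is a path with $c(q,\mathbf m)=0$; $(0)$ is the trivial loop. The composition of $\mathbf u=(u_0,\dots,u_k)$ and $\mathbf n=(n_0,\dots,n_\ell)$ is $\mathbf u\mathbf n=(u_0,\dots,u_{k-1},u_k+n_0,n_1,\dots,n_\ell)$. Zero-skipping: for a path with an entry $m_j=0$, $1\le j\le k-1$, replace $(\dots,m_{j-1},0,m_{j+1},\dots)$ by $(\dots,m_{j-1}+m_{j+1},\dots)$ (this does not change $c(q,\cdot)$); repeating this until no such interior zero remains gives a proper path denoted $\mathbf m^*$. *)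

From HB Require Import structures.
From mathcomp Require Import all_boot all_order all_algebra.
Set Implicit Arguments. Unset Strict Implicit. Unset Printing Implicit Defensive.
Import Order.TTheory GRing.Theory Num.Theory.
Local Open Scope ring_scope.

(* A tuple m = (m_0,...,m_k) is a nonempty sequence of integers; k = size m - 1. *)

(* c(q, m) : c(q,m_0) = m_0, c(q,m_j) = m_j + 1/(q c(q,m_{j-1})). *)
Definition cval (R : realFieldType) (q : R) (m : seq int) : R :=
  match m with
  | [::] => 0
  | m0 :: t => foldl (fun c mj => mj%:~R + (q * c)^-1) (m0%:~R) t
  end.

Definition is_path (R : realFieldType) (q : R) (m : seq int) : Prop :=
  (0 < size m)%N /\
  forall j : nat, (j < (size m).-1)%N -> cval q (take j.+1 m) != 0.

Definition is_proper (m : seq int) : Prop :=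
  forall j : nat, (j < (size m).-1)%N -> nth 0 m j != 0.

Definition is_loop (R : realFieldType) (q : R) (m : seq int) : Prop :=
  is_path q m /\ cval q m = 0.

(* composition u n = (u_0,...,u_{k-1}, u_k + n_0, n_1, ..., n_l) *)
Definition path_comp (u n : seq int) : seq int :=
  match u, n with
  | u0 :: ut, n0 :: nt => belast u0 ut ++ (last u0 ut + n0) :: nt
  | [::], _ => n
  | _, [::] => u
  end.

(* one zero-skipping step at the first interior zero, if any:
   (..., a, 0, b, ...) -> (..., a + b, ...) *)
Fixpoint skip1 (s : seq int) : option (seq int) :=
  match s with
  | [::] => None
  | x :: t =>
      match t with
      | z :: y :: r =>
          if z == 0 then Some ((x + y) :: r) else omap (cons x) (skip1 t)
      | _ => None
      end
  end.

Fixpoint star_fuel (fuel : nat) (s : seq int) : seq int :=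
  match fuel with
  | 0 => s
  | fuel'.+1 => match skip1 s with
                | Some s' => star_fuel fuel' s'
                | None => s
                end
  end.

(* m^* : repeat zero-skipping until no interior zero remains
   (each step shortens the sequence by 2, so size s steps suffice). *)
Definition star (s : seq int) : seq int := star_fuel (size s) s.

From HB Require Import structures.
From mathcomp Require Import all_boot all_order all_algebra.
From mathcomp Require Import zify.
Set Implicit Arguments. Unset Strict Implicit. Unset Printing Implicit Defensive.
Import Order.TTheory GRing.Theory Num.Theory.
Local Open Scope ring_scope.

(* Strip the longest common suffix S, so that m = (A, a, S) and n = (B, b, S)
   with c(A, a) = c(B, b), where A or B is empty or a <> b.  With
   B = (n_0, ..., n_j) take u = (A, a - b, -n_j, ..., -n_0).  Since
   c(s, x) = x + c(s, 0) and c(s, 0) = 1/(q c(s)), the prefix (A, a - b) has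
   value c(B, 0), and appending -n_i turns c(n_0, ..., n_i, 0) into
   c(n_0, ..., n_(i-1), 0); so u ends at c((), 0) = 0 and is a loop.  In the
   composition u n the entry -n_0 + n_0 vanishes, and zero-skipping then
   cancels -n_i, 0, n_i one at a time, leaving (A, a, S) = m.  By maximality
   of S, u = (0) forces A = B = () and a = b, that is m = n. *)

Definition backtrack (s : seq int) : seq int := rev (map -%R s).

Lemma backtrack_cons (x : int) (s : seq int) :
  backtrack (x :: s) = rcons (backtrack s) (- x).
Proof. by rewrite /backtrack map_cons rev_cons. Qed.

Lemma backtrack_rcons (s : seq int) (x : int) :
  backtrack (rcons s x) = - x :: backtrack s.
Proof. by rewrite /backtrack map_rcons rev_rcons. Qed.

Lemma all_nonzero_backtrack (s : seq int) :
  all (predC1 0) (backtrack s) = all (predC1 0) s.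
Proof. by rewrite all_rev all_map; apply: eq_all => v /=; rewrite oppr_eq0. Qed.

Section ContinuedFraction.
Variables (R : realFieldType) (q : R).

Lemma cval_rcons (s : seq int) (x : int) :
  cval q (rcons s x) = x%:~R + cval q (rcons s 0).
Proof. by case: s => [|s0 s] /=; rewrite ?foldl_rcons ?add0r ?addr0. Qed.

Lemma cval_rcons0 (s : seq int) :
  s != [::] -> cval q (rcons s 0) = (q * cval q s)^-1.
Proof. by case: s => // s0 s _; rewrite /= foldl_rcons add0r. Qed.

Lemma cval_rcons_sub (A B : seq int) (a b : int) :
  cval q (rcons A a) = cval q (rcons B b) ->
  cval q (rcons A (a - b)) = cval q (rcons B 0).
Proof.
move=> eq_c; rewrite cval_rcons intrB addrAC -cval_rcons eq_c cval_rcons.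
by rewrite addrAC subrr add0r.
Qed.

Definition nonzero_prefixes (s : seq int) :=
  forall j, (j < size s)%N -> cval q (take j.+1 s) != 0.

Lemma nonzero_prefixes_rcons (s : seq int) (x : int) :
  nonzero_prefixes (rcons s x) <-> nonzero_prefixes s /\ cval q (rcons s x) != 0.
Proof.
rewrite /nonzero_prefixes size_rcons; split=> [nz | [nz cx_neq0] j].
  split=> [j lt_js | ]; last first.
    by have := nz _ (ltnSn _); rewrite take_oversize ?size_rcons.
  by have := nz j (ltnW lt_js); rewrite -cats1 takel_cat.
rewrite ltnS leq_eqVlt => /orP[/eqP -> | lt_js].
  by rewrite take_oversize ?size_rcons.
by rewrite -cats1 takel_cat //; apply: nz.
Qed.

Lemma nonzero_prefixes_cval (s : seq int) :
  s != [::] -> nonzero_prefixes s -> cval q s != 0.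
Proof. by case/lastP: s => // s x _ /nonzero_prefixes_rcons[]. Qed.

Lemma is_path_rcons (s : seq int) (x : int) :
  is_path q (rcons s x) <-> nonzero_prefixes s.
Proof.
rewrite /is_path size_rcons; split=> [[_ nz] j lt_js | nz]; last split=> // j lt_js.
  by have := nz j lt_js; rewrite -cats1 takel_cat.
by rewrite -cats1 takel_cat //; apply: nz.
Qed.

Lemma is_path_nonzero_prefixes (s : seq int) (x : int) (t : seq int) :
  is_path q (rcons s x ++ t) -> nonzero_prefixes s.
Proof.
case=> _ nz j lt_js; have := nz j; rewrite cat_rcons takel_cat //; apply.
by rewrite size_cat /=; lia.
Qed.

Hypothesis q_neq0 : q != 0.

Lemma cval_rconsI (s t : seq int) (x : int) : s != [::] -> t != [::] ->
  cval q (rcons s x) = cval q (rcons t x) -> cval q s = cval q t.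
Proof.
move=> s_neq0 t_neq0; rewrite cval_rcons [RHS]cval_rcons !cval_rcons0 //.
by move/addrI/invr_inj/(mulfI q_neq0).
Qed.

Lemma split_common_suffix (m n : seq int) :
  m != [::] -> n != [::] -> cval q m = cval q n ->
  exists A a B b S, [/\ m = rcons A a ++ S, n = rcons B b ++ S,
    cval q (rcons A a) = cval q (rcons B b) & [|| A == [::], B == [::] | a != b]].
Proof.
elim/last_ind: m n => [//|A a IH] n _.
case/lastP: n => [//|B b] _ eq_c.
have [maximal | ] := boolP [|| A == [::], B == [::] | a != b].
  by exists A, a, B, b, [::]; rewrite !cats0.
rewrite !negb_or negbK => /and3P[A_neq0 B_neq0 /eqP eq_ab]; subst b.
have := IH B A_neq0 B_neq0 (cval_rconsI A_neq0 B_neq0 eq_c).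
move=> [A' [a' [B' [b' [S [-> -> eq_c' maximal]]]]]].
by exists A', a', B', b', (rcons S a); rewrite !rcons_cat.
Qed.

Lemma is_loop_backtrack (P B : seq int) (x : int) :
  nonzero_prefixes P -> nonzero_prefixes B ->
  cval q (rcons P x) = cval q (rcons B 0) -> is_loop q (rcons P x ++ backtrack B).
Proof.
elim/last_ind: B P x => [|B c IH] P x nzP nzB eq_c.
  by rewrite cats0; split; [apply/is_path_rcons | rewrite eq_c].
have [nzB' cBc_neq0] := (nonzero_prefixes_rcons B c).1 nzB.
have rcons_neq0 : rcons B c != [::] by rewrite -size_eq0 size_rcons.
rewrite backtrack_rcons -cat_rcons; apply: IH => //.
  by apply/nonzero_prefixes_rcons; rewrite eq_c cval_rcons0 // invr_eq0 mulf_neq0.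
rewrite cval_rcons cval_rcons0 -?size_eq0 ?size_rcons // eq_c cval_rcons0 //.
by rewrite invfM invrK mulrA mulVf // mul1r [cval _ (rcons B c)]cval_rcons intrN addKr.
Qed.

Lemma maximal_suffix_subr_neq0 (A B : seq int) (a b : int) :
  nonzero_prefixes B -> cval q (rcons A a) = cval q (rcons B b) ->
  [|| A == [::], B == [::] | a != b] -> B != [::] -> a - b != 0.
Proof.
move=> nzB eq_c + B_neq0; rewrite (negbTE B_neq0) /=.
case/orP=> [/eqP A0 | ne_ab]; last by rewrite subr_eq0.
have := cval_rcons_sub eq_c; rewrite A0 cval_rcons0 // => /= eq_ab.
by rewrite -(intr_eq0 R) eq_ab invr_eq0 mulf_neq0 // nonzero_prefixes_cval.
Qed.

End ContinuedFraction.

Lemma is_proper_rcons (s : seq int) (x : int) :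
  is_proper (rcons s x) <-> all (predC1 0) s.
Proof.
rewrite /is_proper size_rcons; split=> [pr | /(all_nthP 0) nz j lt_js].
  by apply/(all_nthP 0) => j lt_js; have := pr j lt_js; rewrite nth_rcons lt_js.
by rewrite nth_rcons lt_js; apply: nz.
Qed.

Lemma is_proper_catl (s : seq int) (x : int) (t : seq int) :
  is_proper (rcons s x ++ t) -> all (predC1 0) s.
Proof.
case/lastP: t => [|t y]; first by rewrite cats0 => /is_proper_rcons.
by rewrite -rcons_cat => /is_proper_rcons; rewrite all_cat all_rcons => /andP[/andP[]].
Qed.

Lemma is_proper_rcons_backtrack (P B : seq int) (x : int) :
  all (predC1 0) P -> all (predC1 0) B -> (B != [::] -> x != 0) ->
  is_proper (rcons P x ++ backtrack B).
Proof.
case: B => [|c C] nzP nzB x_neq0; first by rewrite cats0; apply/is_proper_rcons.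
rewrite backtrack_cons -rcons_cat; apply/is_proper_rcons.
by rewrite all_cat all_rcons /= x_neq0 // nzP all_nonzero_backtrack; case/andP: nzB.
Qed.

Lemma skip1_proper (s : seq int) : is_proper s -> skip1 s = None.
Proof.
elim: s => [|x t IH] //= pr; case: t IH pr => [|z [|y r]] //= IH pr.
have z_neq0 : z != 0 by apply: (pr 1%N).
rewrite (negbTE z_neq0) IH // => j lt_j; apply: (pr j.+1); move: lt_j => /=; lia.
Qed.

Lemma skip1_cons (x : int) (t : seq int) :
  head 1 t != 0 -> skip1 (x :: t) = omap (cons x) (skip1 t).
Proof. by case: t => [|z [|y r]] // z_neq0; rewrite /= (negbTE z_neq0). Qed.

Lemma skip1_cat (P : seq int) (x y : int) (t : seq int) :
  all (predC1 0) P -> x != 0 ->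
  skip1 (P ++ x :: 0 :: y :: t) = Some (P ++ (x + y) :: t).
Proof.
elim: P => [|p P IH] nzP x_neq0; first by [].
case/andP: nzP => p_neq0 nzP; rewrite cat_cons skip1_cons ?IH //.
by case: P {IH} nzP => //= ? ? /andP[].
Qed.

Lemma star_fuel_proper (f : nat) (s : seq int) : is_proper s -> star_fuel f s = s.
Proof. by move/skip1_proper; case: f => //= f ->. Qed.

Lemma star_fuel_skip1 (f : nat) (s s' : seq int) :
  skip1 s = Some s' -> star_fuel f.+1 s = star_fuel f s'.
Proof. by move=> /= ->. Qed.

Lemma star_fuel_backtrack (P C t : seq int) (x y : int) (f : nat) :
  all (predC1 0) P -> x != 0 -> all (predC1 0) C -> (size C < f)%N ->
  star_fuel f (P ++ x :: backtrack C ++ 0 :: C ++ y :: t) =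
  star_fuel (f - (size C).+1) (P ++ (x + y) :: t).
Proof.
move=> nzP x_neq0; elim: C f => [|c C IH] [|f] // nzC lt_Cf.
  by rewrite /= skip1_cat // subSS subn0.
case/andP: nzC => c_neq0 nzC.
rewrite backtrack_cons cat_rcons -cat_cons catA (star_fuel_skip1 _ (skip1_cat _ _ _ _)).
- by rewrite addNr -catA cat_cons IH.
- by rewrite all_cat nzP /= x_neq0 all_nonzero_backtrack.
- by rewrite oppr_eq0.
Qed.

Lemma star_proper (s : seq int) : is_proper s -> star s = s.
Proof. exact: star_fuel_proper. Qed.

Lemma path_comp_rcons (s : seq int) (x y : int) (t : seq int) :
  path_comp (rcons s x) (y :: t) = s ++ (x + y) :: t.
Proof. by case: s => [|s0 s] //=; rewrite belast_rcons last_rcons. Qed.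

Lemma star_comp_backtrack (P B t : seq int) (x y : int) :
  all (predC1 0) P -> all (predC1 0) B -> (B != [::] -> x != 0) ->
  is_proper (P ++ (x + y) :: t) ->
  star (path_comp (rcons P x ++ backtrack B) (rcons B y ++ t)) = P ++ (x + y) :: t.
Proof.
case: B => [|c C] nzP nzB x_neq0 pr.
  by rewrite cats0 path_comp_rcons star_proper.
case/andP: nzB => _ nzC.
rewrite backtrack_cons -rcons_cat rcons_cons cat_cons path_comp_rcons addNr -catA.
rewrite !cat_rcons /star star_fuel_backtrack ?star_fuel_proper ?x_neq0 //.
by rewrite size_cat /= size_cat /= size_cat; lia.
Qed.

Lemma maximal_suffix_loop_trivial (A B S : seq int) (a b : int) :
  [|| A == [::], B == [::] | a != b] ->
  rcons A (a - b) ++ backtrack B = [:: 0] <-> rcons A a ++ S = rcons B b ++ S.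
Proof.
move=> maximal; split=> [u0 | eq_mn].
  have /eqP := congr1 size u0.
  rewrite size_cat size_rcons /backtrack size_rev size_map addSn eqSS addn_eq0.
  case/andP; rewrite !size_eq0 => /eqP A0 /eqP B0; move: u0; rewrite A0 B0 => -[/eqP].
  by rewrite subr_eq0 => /eqP ->.
have eq_size : size (rcons A a) = size (rcons B b).
  by apply/(@addIn (size S)); rewrite -!size_cat eq_mn.
move/eqP: eq_mn; rewrite eqseq_cat // eqxx andbT eqseq_rcons.
case/andP=> /eqP eq_AB /eqP eq_ab.
by move: maximal; rewrite eq_AB eq_ab eqxx orbF orbb => /eqP ->; rewrite subrr.
Qed.

Theorem lemma3 (R : realFieldType) (q : R) (m n : seq int) :
  0 < q ->
  is_path q m -> is_proper m ->
  is_path q n -> is_proper n ->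
  cval q m = cval q n ->
  exists u : seq int,
    is_loop q u /\ is_proper u /\
    m = star (path_comp u n) /\
    (u <> [:: 0] <-> m <> n).
Proof.
move=> q_gt0 path_m proper_m path_n proper_n eq_c.
have q_neq0 : q != 0 by rewrite gt_eqF.
have m_neq0 : m != [::] by case: path_m; case: (m).
have n_neq0 : n != [::] by case: path_n; case: (n).
have [A [a [B [b [S [eq_m eq_n eq_c' maximal]]]]]] :=
  split_common_suffix q_neq0 m_neq0 n_neq0 eq_c.
subst m n.
have nzA := is_proper_catl proper_m; have nzB := is_proper_catl proper_n.
have nzpA := is_path_nonzero_prefixes path_m.
have nzpB := is_path_nonzero_prefixes path_n.
have ab_neq0 := maximal_suffix_subr_neq0 q_neq0 nzpB eq_c' maximal.
exists (rcons A (a - b) ++ backtrack B); split; [|split; [|split]].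
- by apply: is_loop_backtrack => //; apply: cval_rcons_sub.
- exact: is_proper_rcons_backtrack.
- by rewrite star_comp_backtrack ?subrK -?cat_rcons.
- have eq_iff := maximal_suffix_loop_trivial S maximal.
  by split=> [ne_u eq_mn | ne_mn eq_u]; [apply: ne_u | apply: ne_mn]; apply/eq_iff.
Qed.
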